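(* Let $v=(x,y,z)^T\in\mathbb{O}^3$ with associator $[v]:=[x,y,z]\neq 0$. If there exists a $3\times3$ Hermitian octonionic matrix $A$ with $Av=v[v]$, then $\operatorname{Re}(x)=\operatorname{Re}(y)=\operatorname{Re}(z)=0$, i.e. $\operatorname{Re}(v)=0$.
   Context: $\mathbb{O}$ denotes the real octonions (8-dimensional normed division algebra, nonassociative). For $w\in\mathbb{O}$, $\operatorname{Re}(w)$ is its real part. The associator is $[x,y,z]=(xy)z-x(yz)$. A $3\times3$ Hermitian octonionic matrix has the form $A=\begin{pmatrix} p & a & \bar c\\ \bar a & m & b\\ c & \bar b & n\end{pmatrix}$ with $p,m,n\in\mathbb{R}$, $a,b,c\in\mathbb{O}$. $Av$ has components $\sum_j A_{ij}v_j$ (octonionic products) and $v[v]=(x[v],y[v],z[v])^T$; thus $Av=v[v]$ means $px+ay+\bar c z = x[v]$, $\bar a x+my+bz=y[v]$, $cx+\bar b y+nz=z[v]$. *)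

From Stdlib Require Import Reals.
Open Scope R_scope.

(* Quaternions a + b i + c j + d k *)
Record quat : Type := Quat { q0 : R; q1 : R; q2 : R; q3 : R }.

Definition qadd (p q : quat) : quat :=
  Quat (q0 p + q0 q) (q1 p + q1 q) (q2 p + q2 q) (q3 p + q3 q).
Definition qopp (p : quat) : quat :=
  Quat (- q0 p) (- q1 p) (- q2 p) (- q3 p).
Definition qconj (p : quat) : quat :=
  Quat (q0 p) (- q1 p) (- q2 p) (- q3 p).
(* Hamilton product, i^2 = j^2 = k^2 = ijk = -1 *)
Definition qmul (p q : quat) : quat :=
  Quat (q0 p * q0 q - q1 p * q1 q - q2 p * q2 q - q3 p * q3 q)
       (q0 p * q1 q + q1 p * q0 q + q2 p * q3 q - q3 p * q2 q)
       (q0 p * q2 q - q1 p * q3 q + q2 p * q0 q + q3 p * q1 q)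
       (q0 p * q3 q + q1 p * q2 q - q2 p * q1 q + q3 p * q0 q).

(* Octonions as pairs of quaternions (Cayley-Dickson):
   (a,b)(c,d) = (ac - conj(d) b, d a + b conj(c)),  conj(a,b) = (conj a, -b). *)
Record oct : Type := Oct { ofst : quat; osnd : quat }.

Definition oadd (x y : oct) : oct :=
  Oct (qadd (ofst x) (ofst y)) (qadd (osnd x) (osnd y)).
Definition oopp (x : oct) : oct := Oct (qopp (ofst x)) (qopp (osnd x)).
Definition osub (x y : oct) : oct := oadd x (oopp y).
Definition omul (x y : oct) : oct :=
  Oct (qadd (qmul (ofst x) (ofst y)) (qopp (qmul (qconj (osnd y)) (osnd x))))
      (qadd (qmul (osnd y) (ofst x)) (qmul (osnd x) (qconj (ofst y)))).
Definition oconj (x : oct) : oct := Oct (qconj (ofst x)) (qopp (osnd x)).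

Definition oreal (r : R) : oct := Oct (Quat r 0 0 0) (Quat 0 0 0 0).
Definition ozero : oct := oreal 0.

Definition oRe (x : oct) : R := q0 (ofst x).

Definition assoc (x y z : oct) : oct :=
  osub (omul (omul x y) z) (omul x (omul y z)).

(* A v = v [v] for the Hermitian matrix
     A = [[p, a, conj c], [conj a, m, b], [c, conj b, n]],  p m n real. *)
Definition herm_eigen (p m n : R) (a b c x y z : oct) : Prop :=
  let w := assoc x y z in
  oadd (oadd (omul (oreal p) x) (omul a y)) (omul (oconj c) z) = omul x w /\
  oadd (oadd (omul (oconj a) x) (omul (oreal m) y)) (omul b z) = omul y w /\
  oadd (oadd (omul c x) (omul (oconj b) y)) (omul (oreal n) z) = omul z w.

From Stdlib Require Import Reals Lra Psatz.
Open Scope R_scope.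

(* Let <u, w> be the Euclidean inner product on O = R^8.  For
   the test triple
     U = ( |x|^2 z - <x,z> x ,  <x,z> y - (y conj z) x ,  <x,z> z - |z|^2 x )
   we show:
   (1) U is orthogonal to A v for EVERY Hermitian A: <U_i, v_i> = 0 kills the
       real diagonal entries, and three identities of the form
       U_1 conj y + conj (U_2 conj x) = 0 kill each off-diagonal pair a, conj a
       (each entry a enters <U, A v> as <U_1 conj y + conj (U_2 conj x), a>);
   (2) <U, v [v]> = Re(y) |[v]|^2, using alternativity of O and the facts
       Re [v] = 0, [v] orthogonal to conj(x) z and conj(z) x.
   Hence A v = v [v] and [v] <> 0 force Re(y) = 0.  The eigen-equation is
   invariant under the cyclic rotation (x,y,z) -> (y,z,x) (with the entries of
   A rotated accordingly), as is the associator, which gives Re(z) and Re(x). *)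

Definition dot (a b : oct) : R :=
  q0 (ofst a) * q0 (ofst b) + q1 (ofst a) * q1 (ofst b)
  + q2 (ofst a) * q2 (ofst b) + q3 (ofst a) * q3 (ofst b)
  + q0 (osnd a) * q0 (osnd b) + q1 (osnd a) * q1 (osnd b)
  + q2 (osnd a) * q2 (osnd b) + q3 (osnd a) * q3 (osnd b).

Ltac destruct_octs :=
  repeat match goal with
  | o : oct |- _ => destruct o as [[? ? ? ?] [? ? ? ?]]
  end.
Ltac unfold_oct :=
  cbv beta iota delta [dot oRe osub oadd oopp omul oconj oreal ozero assoc
                       qadd qmul qopp qconj ofst osnd q0 q1 q2 q3].
Ltac oct_ring := destruct_octs; unfold_oct; ring.
Ltac oct_eq := destruct_octs; unfold_oct; f_equal; f_equal; ring.

Lemma dot_add_l (a b u : oct) : dot (oadd a b) u = dot a u + dot b u.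
Proof. oct_ring. Qed.
Lemma dot_add_r (u a b : oct) : dot u (oadd a b) = dot u a + dot u b.
Proof. oct_ring. Qed.
Lemma dot_sub_l (a b u : oct) : dot (osub a b) u = dot a u - dot b u.
Proof. oct_ring. Qed.
Lemma dot_sub_r (u a b : oct) : dot u (osub a b) = dot u a - dot u b.
Proof. oct_ring. Qed.
Lemma dot_opp_l (a b : oct) : dot (oopp a) b = - dot a b.
Proof. oct_ring. Qed.
Lemma dot_scale_l (r : R) (a u : oct) : dot (omul (oreal r) a) u = r * dot a u.
Proof. oct_ring. Qed.
Lemma dot_scale_r (u : oct) (r : R) (a : oct) :
  dot u (omul (oreal r) a) = r * dot u a.
Proof. oct_ring. Qed.
Lemma dot_zero_l (u : oct) : dot ozero u = 0.
Proof. oct_ring. Qed.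
Lemma dot_sym (a b : oct) : dot a b = dot b a.
Proof. oct_ring. Qed.

Lemma dot_self_neq0 (a : oct) : a <> ozero -> dot a a <> 0.
Proof.
  intros Ha H. apply Ha. destruct_octs. unfold dot in H; simpl in H.
  unfold ozero, oreal. repeat f_equal; nra.
Qed.

Lemma dot_mul_r_adj (u a v : oct) : dot u (omul a v) = dot (omul u (oconj v)) a.
Proof. oct_ring. Qed.
Lemma dot_mul_l_adj (u a v : oct) : dot u (omul a v) = dot (omul (oconj a) u) v.
Proof. oct_ring. Qed.
Lemma dot_conj (u a : oct) : dot u (oconj a) = dot (oconj u) a.
Proof. oct_ring. Qed.

Lemma dot_mul_same_l (y a b : oct) :
  dot (omul y a) (omul y b) = dot y y * dot a b.
Proof. oct_ring. Qed.
Lemma dot_mul_same_r (z a b : oct) :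
  dot (omul a z) (omul b z) = dot z z * dot a b.
Proof. oct_ring. Qed.

Lemma dot_self_mul (a w : oct) : dot a (omul a w) = dot a a * oRe w.
Proof. oct_ring. Qed.
Lemma dot_mul_self (y w : oct) : dot w (omul y w) = oRe y * dot w w.
Proof. oct_ring. Qed.

Lemma left_alternative (a b : oct) : omul a (omul a b) = omul (omul a a) b.
Proof. oct_eq. Qed.
Lemma conj_conj_mul (x z : oct) : omul (oconj z) x = oconj (omul (oconj x) z).
Proof. oct_eq. Qed.

Lemma re_assoc (x y z : oct) : oRe (assoc x y z) = 0.
Proof. oct_ring. Qed.
Lemma conj_assoc (x y z : oct) : oconj (assoc x y z) = oopp (assoc x y z).
Proof. oct_eq. Qed.
Lemma assoc_rotate (x y z : oct) : assoc y z x = assoc x y z.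
Proof. oct_eq. Qed.
Lemma assoc_yzx (x y z : oct) :
  omul (omul y (oconj z)) x = osub (omul y (omul (oconj z) x)) (assoc x y z).
Proof. oct_eq. Qed.

Lemma assoc_orth_conj_l (x y z : oct) :
  dot (omul (oconj x) z) (assoc x y z) = 0.
Proof.
  unfold assoc at 1. rewrite dot_sub_r, dot_mul_same_r.
  rewrite (dot_mul_l_adj _ x (omul y z)), left_alternative, dot_mul_same_r.
  rewrite (dot_mul_l_adj (oconj x) x y). ring.
Qed.

Lemma assoc_orth_conj_r (x y z : oct) :
  dot (omul (oconj z) x) (assoc x y z) = 0.
Proof.
  rewrite conj_conj_mul, dot_sym, dot_conj, conj_assoc, dot_opp_l, dot_sym,
    assoc_orth_conj_l.
  ring.
Qed.

(* Conditions on a triple (u1,u2,u3) making it orthogonal to A v for every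
   Hermitian A: orthogonality to the diagonal terms, and cancellation of the
   contributions of the off-diagonal entries a, b, c. *)
Definition annihilates_hermitian (u1 u2 u3 x y z : oct) : Prop :=
  dot u1 x = 0 /\ dot u2 y = 0 /\ dot u3 z = 0 /\
  oadd (omul u1 (oconj y)) (oconj (omul u2 (oconj x))) = ozero /\
  oadd (omul u2 (oconj z)) (oconj (omul u3 (oconj y))) = ozero /\
  oadd (oconj (omul u1 (oconj z))) (omul u3 (oconj x)) = ozero.

Lemma annihilates_hermitian_orth (u1 u2 u3 x y z : oct) (p m n : R) (a b c : oct) :
  annihilates_hermitian u1 u2 u3 x y z ->
  dot u1 (oadd (oadd (omul (oreal p) x) (omul a y)) (omul (oconj c) z))
  + dot u2 (oadd (oadd (omul (oconj a) x) (omul (oreal m) y)) (omul b z))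
  + dot u3 (oadd (oadd (omul c x) (omul (oconj b) y)) (omul (oreal n) z)) = 0.
Proof.
  intros (D1 & D2 & D3 & Oa & Ob & Oc).
  assert (Ea : dot u1 (omul a y) + dot u2 (omul (oconj a) x) = 0).
  { rewrite dot_mul_r_adj, (dot_mul_r_adj _ (oconj a)), dot_conj, <- dot_add_l,
      Oa, dot_zero_l.
    reflexivity. }
  assert (Eb : dot u2 (omul b z) + dot u3 (omul (oconj b) y) = 0).
  { rewrite dot_mul_r_adj, (dot_mul_r_adj _ (oconj b)), (dot_conj _ b),
      <- dot_add_l, Ob, dot_zero_l.
    reflexivity. }
  assert (Ec : dot u1 (omul (oconj c) z) + dot u3 (omul c x) = 0).
  { rewrite dot_mul_r_adj, (dot_mul_r_adj _ c), dot_conj, <- dot_add_l, Oc,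
      dot_zero_l.
    reflexivity. }
  rewrite !dot_add_r, !dot_scale_r, D1, D2, D3. lra.
Qed.

Definition test1 (x y z : oct) : oct :=
  osub (omul (oreal (dot x x)) z) (omul (oreal (dot x z)) x).
Definition test2 (x y z : oct) : oct :=
  osub (omul (oreal (dot x z)) y) (omul (omul y (oconj z)) x).
Definition test3 (x y z : oct) : oct :=
  osub (omul (oreal (dot x z)) z) (omul (oreal (dot z z)) x).

(* The test triple satisfies the annihilation conditions; these are
   consequences of alternativity ((a b) conj b = |b|^2 a), checked on
   coordinates. *)
Lemma test_annihilates_hermitian (x y z : oct) :
  annihilates_hermitian (test1 x y z) (test2 x y z) (test3 x y z) x y z.
Proof.
  unfold annihilates_hermitian, test1, test2, test3.
  split; [oct_ring | split; [oct_ring | split; [oct_ring |]]].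
  split; [oct_eq | split; oct_eq].
Qed.

Lemma test1_pairing (x y z : oct) : dot (test1 x y z) (omul x (assoc x y z)) = 0.
Proof.
  unfold test1 at 1. rewrite dot_sub_l, !dot_scale_l, dot_self_mul, re_assoc,
    dot_mul_l_adj, assoc_orth_conj_l.
  ring.
Qed.

Lemma test2_pairing (x y z : oct) :
  dot (test2 x y z) (omul y (assoc x y z)) = oRe y * dot (assoc x y z) (assoc x y z).
Proof.
  unfold test2 at 1. rewrite dot_sub_l, dot_scale_l, dot_self_mul, re_assoc,
    assoc_yzx, dot_sub_l, dot_mul_same_l, assoc_orth_conj_r, dot_mul_self.
  ring.
Qed.

Lemma test3_pairing (x y z : oct) : dot (test3 x y z) (omul z (assoc x y z)) = 0.
Proof.
  unfold test3 at 1. rewrite dot_sub_l, !dot_scale_l, dot_self_mul, re_assoc,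
    (dot_mul_l_adj x), assoc_orth_conj_r.
  ring.
Qed.

Lemma herm_eigen_re_middle (p m n : R) (a b c x y z : oct) :
  herm_eigen p m n a b c x y z -> assoc x y z <> ozero -> oRe y = 0.
Proof.
  intros (E1 & E2 & E3) Hw.
  pose proof (annihilates_hermitian_orth _ _ _ _ _ _ p m n a b c
                (test_annihilates_hermitian x y z)) as Horth.
  rewrite E1, E2, E3, test1_pairing, test2_pairing, test3_pairing in Horth.
  rewrite Rplus_0_l, Rplus_0_r in Horth.
  apply Rmult_integral in Horth as [Hre | Hre]; [exact Hre |].
  exfalso. exact (dot_self_neq0 _ Hw Hre).
Qed.

Lemma herm_eigen_rotate (p m n : R) (a b c x y z : oct) :
  herm_eigen p m n a b c x y z -> herm_eigen m n p b c a y z x.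
Proof.
  assert (Rot : forall A B C : oct, oadd (oadd A B) C = oadd (oadd B C) A)
    by (intros; oct_eq).
  unfold herm_eigen. intros (E1 & E2 & E3). rewrite assoc_rotate.
  rewrite Rot in E1, E2, E3. split; [exact E2 | split; [exact E3 | exact E1]].
Qed.

Theorem theorem1 (x y z : oct) :
  assoc x y z <> ozero ->
  (exists (p m n : R) (a b c : oct), herm_eigen p m n a b c x y z) ->
  oRe x = 0 /\ oRe y = 0 /\ oRe z = 0.
Proof.
  intros Hw (p & m & n & a & b & c & E).
  pose proof (herm_eigen_rotate _ _ _ _ _ _ _ _ _ E) as E'.
  pose proof (herm_eigen_rotate _ _ _ _ _ _ _ _ _ E') as E''.
  assert (Hw' : assoc y z x <> ozero) by (rewrite assoc_rotate; exact Hw).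
  assert (Hw'' : assoc z x y <> ozero) by (rewrite assoc_rotate; exact Hw').
  split; [| split].
  - exact (herm_eigen_re_middle _ _ _ _ _ _ _ _ _ E'' Hw'').
  - exact (herm_eigen_re_middle _ _ _ _ _ _ _ _ _ E Hw).
  - exact (herm_eigen_re_middle _ _ _ _ _ _ _ _ _ E' Hw').
Qed.
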